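(* Let $\mathcal C$ be a regular representation class of a $*$-algebra $\mathcal A$ and let $I$ be a two-sided ideal of $\mathcal A$. Then $\sqrt[\mathcal C\text{-}\mathrm{hard}]{I}\subseteq\sqrt[\mathcal C\text{-}\mathrm{left}]{I}$ (and hence, since the reverse inclusion always holds, $\sqrt[\mathcal C\text{-}\mathrm{hard}]{I}=\sqrt[\mathcal C\text{-}\mathrm{left}]{I}$).
   Context: $\mathbb F\in\{\mathbb R,\mathbb C\}$. A $*$-algebra is a unital associative $\mathbb F$-algebra with involution. A $*$-representation $\pi$ is a unital $*$-homomorphism from $\mathcal A$ into the adjointable linear operators on a pre-Hilbert space $V_\pi$ over $\mathbb F$. For a class $\mathcal C$ of $*$-representations: $\sqrt[\mathcal C\text{-}\mathrm{hard}]{I}=\{a\in\mathcal A:\pi(a)=0 \text{ for all }\pi\in\mathcal C \text{ with }\pi(I)=0\}$; $\sqrt[\mathcal C\text{-}\mathrm{left}]{I}=\{a\in\mathcal A:\pi(a)v=0 \text{ for all }\pi\in\mathcal C, v\in V_\pi \text{ with }\pi(s)v=0\ \forall s\in I\}$. $\mathcal C$ is regular if for every $\pi\in\mathcal C$ and $v\in V_\pi$ there exist $\tilde\pi\in\mathcal C$ and $\tilde v\in V_{\tilde\pi}$ with $\tilde\pi(\mathcal A)\tilde v=V_{\tilde\pi}$ and $\|\pi(a)v\|=\|\tilde\pi(a)\tilde v\|$ for all $a\in\mathcal A$. *)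

From HB Require Import structures.
From mathcomp Require Import all_boot all_order all_algebra.
Set Implicit Arguments. Unset Strict Implicit. Unset Printing Implicit Defensive.
Import Order.TTheory GRing.Theory Num.Theory.
Local Open Scope ring_scope.

(* Scalar field F (in the paper: R or C) is modelled as a numFieldType
   equipped with a conjugation [conj] (identity for R, complex conjugation
   for C). *)
Definition scalar_conj (F : numFieldType) (conj : F -> F) : Prop :=
  [/\ forall x y, conj (x + y) = conj x + conj y,
      forall x y, conj (x * y) = conj x * conj y,
      conj 1 = 1 &
      forall x, conj (conj x) = x].

Definition star_involution (F : numFieldType) (conj : F -> F)
  (A : algType F) (star : A -> A) : Prop :=
  [/\ forall a, star (star a) = a,
      forall a b, star (a + b) = star a + star b,
      forall (k : F) a, star (k *: a) = conj k *: star a &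
      forall a b, star (a * b) = star b * star a].

Section Reps.
Variables (F : numFieldType) (conj : F -> F) (A : algType F) (star : A -> A).

Record preHilbert := PreHilbert {
  phV :> lmodType F;
  ip : phV -> phV -> F;
  ip_linear : forall u (k : F) v w, ip u (k *: v + w) = k * ip u v + ip u w;
  ip_sym : forall u v, ip v u = conj (ip u v);
  ip_pos : forall v, 0 <= ip v v;
  ip_def : forall v, ip v v = 0 -> v = 0
}.

Record srep := SRep {
  rV : preHilbert;
  rep : A -> rV -> rV;
  rep_linear : forall a (k : F) u v, rep a (k *: u + v) = k *: rep a u + rep a v;
  rep_one : forall v, rep 1 v = v;
  rep_mul : forall a b v, rep (a * b) v = rep a (rep b v);
  rep_add : forall a b v, rep (a + b) v = rep a v + rep b v;
  rep_scale : forall (k : F) a v, rep (k *: a) v = k *: rep a v;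
  rep_star : forall a u w, ip (rep a u) w = ip u (rep (star a) w)
}.

Definition two_sided_ideal (I : A -> Prop) : Prop :=
  [/\ I 0,
      forall s t, I s -> I t -> I (s + t),
      forall a s, I s -> I (a * s) &
      forall a s, I s -> I (s * a)].

Definition hard_radical (C : srep -> Prop) (I : A -> Prop) (a : A) : Prop :=
  forall pi : srep, C pi ->
    (forall s, I s -> forall v : rV pi, rep s v = 0) ->
    forall v : rV pi, rep a v = 0.

Definition left_radical (C : srep -> Prop) (I : A -> Prop) (a : A) : Prop :=
  forall (pi : srep) (v : rV pi), C pi ->
    (forall s, I s -> rep s v = 0) -> rep a v = 0.

(* Regularity; ||x|| = ||y|| is expressed as <x,x> = <y,y>
   (the norm is the square root of the latter). *)
Definition regular_class (C : srep -> Prop) : Prop :=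
  forall (pi : srep) (v : rV pi), C pi ->
    exists (pi' : srep) (v' : rV pi'),
      [/\ C pi',
          (forall w : rV pi', exists a, rep a v' = w) &
          forall a, ip (rep a v) (rep a v) = ip (rep a v') (rep a v')].

End Reps.

From HB Require Import structures.
From mathcomp Require Import all_boot all_order all_algebra.
Import Order.TTheory GRing.Theory Num.Theory.
Local Open Scope ring_scope.

(* The inclusion left ⊆ hard holds for any class: if pi(I) = 0 then every
   vector is annihilated by pi(I).  For hard ⊆ left, take pi in C and v with
   pi(I)v = 0.  Regularity gives a cyclic (pi', v') in C with
   ||pi(b)v|| = ||pi'(b)v'|| for all b; since a vector vanishes iff its norm
   does, pi(b)v = 0 <-> pi'(b)v' = 0.  Because I is a right ideal,
   pi'(s)pi'(b)v' = pi'(sb)v' = 0 for s in I, and cyclicity of v' turns this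
   into pi'(I) = 0.  Now a in the hard radical gives pi'(a) = 0, in
   particular pi'(a)v' = 0, hence pi(a)v = 0.
   The file first records the two pre-Hilbert facts (zero vector, norm
   transfer), then the cyclic annihilation lemma, then the two inclusions. *)

Section PreHilbertFacts.
Variables (F : numFieldType) (conj : F -> F) (V : preHilbert conj).

Lemma ip00 : ip (0 : V) 0 = 0.
Proof.
have := ip_linear (0 : V) 1 0 0.
rewrite scaler0 addr0 mul1r => H.
by apply: (@addrI _ (ip (0 : V) 0)); rewrite addr0 -H.
Qed.

Lemma ip_self_eq0 (v : V) : ip v v = 0 <-> v = 0.
Proof. by split=> [/ip_def // | ->]; exact: ip00. Qed.

End PreHilbertFacts.

Lemma eq_norm_eq0 (F : numFieldType) (conj : F -> F)
    (V W : preHilbert conj) (v : V) (w : W) :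
  ip v v = ip w w -> v = 0 -> w = 0.
Proof. by move=> Hnorm /ip_self_eq0; rewrite Hnorm => /ip_self_eq0. Qed.

Section Radicals.
Variables (F : numFieldType) (conj : F -> F) (A : algType F) (star : A -> A).

(* If a right ideal I kills a cyclic vector v of pi, then pi(I) = 0:
   every vector is pi(b)v and pi(s)pi(b)v = pi(sb)v with sb in I. *)
Lemma cyclic_annihilator (I : A -> Prop) (pi : srep conj star) (v : rV pi) :
  (forall b s, I s -> I (s * b)) ->
  (forall w : rV pi, exists b, rep b v = w) ->
  (forall s, I s -> rep s v = 0) ->
  forall s, I s -> forall w : rV pi, rep s w = 0.
Proof.
move=> Iright Hcyc Hv s Is w; have [b <-] := Hcyc w.
by rewrite -rep_mul; apply: Hv; apply: Iright.
Qed.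

Lemma left_radical_sub_hard (C : srep conj star -> Prop) (I : A -> Prop) a :
  left_radical C I a -> hard_radical C I a.
Proof. by move=> Ha pi Cpi Hs v; apply: Ha => // s Is; apply: Hs. Qed.

(* For a regular class and a right ideal, the hard radical is contained in
   the left radical: pass to the cyclic representation given by regularity. *)
Lemma hard_radical_sub_left (C : srep conj star -> Prop) (I : A -> Prop) a :
  regular_class C -> (forall b s, I s -> I (s * b)) ->
  hard_radical C I a -> left_radical C I a.
Proof.
move=> Hreg Iright Ha pi v Cpi Hv.
have [pi' [v' [Cpi' Hcyc Hnorm]]] := Hreg pi v Cpi.
have Hv' : forall s, I s -> rep s v' = 0.
  by move=> s Is; apply: eq_norm_eq0 (Hnorm s) (Hv s Is).
have pi'I0 := @cyclic_annihilator I pi' v' Iright Hcyc Hv'.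
by apply: eq_norm_eq0 (esym (Hnorm a)) (Ha pi' Cpi' pi'I0 v').
Qed.

End Radicals.

Theorem proposition5p4 (F : numFieldType) (conj : F -> F) (A : algType F)
  (star : A -> A) (C : srep conj star -> Prop) (I : A -> Prop) :
  scalar_conj conj -> star_involution conj star ->
  regular_class C -> two_sided_ideal I ->
  (forall a, hard_radical C I a -> left_radical C I a) /\
  (forall a, hard_radical C I a <-> left_radical C I a).
Proof.
move=> _ _ Hreg [_ _ _ Iright].
have hard_sub_left a := @hard_radical_sub_left _ _ _ _ C I a Hreg Iright.
split=> // a; split; first exact: hard_sub_left.
exact: left_radical_sub_hard.
Qed.
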